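(* For distinct $i,j\in\{1,2,3\}$, the element $y_i+y_j$ is perfect in $D^{2,2,2}$.
   Context: $D^{2,2,2}$ is the modular lattice generated by $x_1,y_1,x_2,y_2,x_3,y_3$ subject only to $x_i\subseteq y_i$ ($i=1,2,3$), with a greatest element $I$ adjoined. Join is written $a+b$. A representation $\rho$ of $D^{2,2,2}$ in a finite-dimensional vector space $X$ (over a field) is a lattice morphism from $D^{2,2,2}$ to the subspace lattice of $X$, with $\rho(I)=X$; it is determined by subspaces $X_i=\rho(x_i)\subseteq Y_i=\rho(y_i)\subseteq X$. $\rho$ is decomposable if $X=X'\oplus X''$ with $X',X''\neq0$ and $\rho(a)=(\rho(a)\cap X')+(\rho(a)\cap X'')$ for all $a$. It is indecomposable if $X\ne0$ and it is not decomposable. An element $a\in D^{2,2,2}$ is perfect if $\rho(a)\in\{0,X\}$ for every indecomposable representation $\rho$ in a space $X$. *)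

From HB Require Import structures.
From mathcomp Require Import all_boot all_order all_algebra.
Set Implicit Arguments. Unset Strict Implicit. Unset Printing Implicit Defensive.
Import GRing.Theory.
Local Open Scope ring_scope.

(* Lattice terms over the generators x_1,y_1,x_2,y_2,x_3,y_3 (indexed by 'I_3)
   and the adjoined top element I.  Every element of D^{2,2,2} is the value of
   such a term, and a representation (lattice morphism) sends a term to the
   corresponding lattice polynomial in the subspaces. *)
Inductive d222_term : Type :=
  | GX of 'I_3
  | GY of 'I_3
  | GI
  | TJoin of d222_term & d222_term
  | TMeet of d222_term & d222_term.

Fixpoint rep_eval (K : fieldType) (vT : vectType K)
    (X Y : 'I_3 -> {vspace vT}) (t : d222_term) : {vspace vT} :=
  match t with
  | GX i => X i
  | GY i => Y i
  | GI => fullv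
  | TJoin a b => (rep_eval X Y a + rep_eval X Y b)%VS
  | TMeet a b => (rep_eval X Y a :&: rep_eval X Y b)%VS
  end.

Definition is_rep (K : fieldType) (vT : vectType K) (X Y : 'I_3 -> {vspace vT}) :=
  forall i, (X i <= Y i)%VS.

Definition rep_decomposable (K : fieldType) (vT : vectType K)
    (X Y : 'I_3 -> {vspace vT}) : Prop :=
  exists (X1 X2 : {vspace vT}),
    [/\ X1 != 0%VS, X2 != 0%VS, directv (X1 + X2), (X1 + X2)%VS = fullv
      & forall t : d222_term,
          rep_eval X Y t = ((rep_eval X Y t :&: X1) + (rep_eval X Y t :&: X2))%VS].

Definition rep_indecomposable (K : fieldType) (vT : vectType K)
    (X Y : 'I_3 -> {vspace vT}) : Prop :=
  (fullv : {vspace vT}) != 0%VS /\ ~ rep_decomposable X Y.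

Definition perfect (a : d222_term) : Prop :=
  forall (K : fieldType) (vT : vectType K) (X Y : 'I_3 -> {vspace vT}),
    is_rep X Y -> rep_indecomposable X Y ->
    rep_eval X Y a = 0%VS \/ rep_eval X Y a = fullv.

From HB Require Import structures.
From mathcomp Require Import all_boot all_order all_algebra.
Set Implicit Arguments. Unset Strict Implicit. Unset Printing Implicit Defensive.
Import GRing.Theory.
Local Open Scope ring_scope.

(* Let W := Y_i + Y_j and let k be the third index.  If W is neither 0 nor the
   whole space, W has a complement U such that both X_k and Y_k split along the
   decomposition W (+) U; the other four generators lie in W, and splitting
   along a direct decomposition is preserved by sums and intersections, so the
   representation decomposes as W (+) U. *)

Section SplittingAlongDecomposition.
Variables (K : fieldType) (vT : vectType K).
Implicit Types A B S T U W : {vspace vT}.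

Definition splits W U A := A = (A :&: W + A :&: U)%VS.

Lemma splits_subv W U A : (A <= A :&: W + A :&: U)%VS -> splits W U A.
Proof. by move=> sA; apply/subv_anti; rewrite sA subv_add !capvSl. Qed.

Lemma splits_addv W U A B : splits W U A -> splits W U B -> splits W U (A + B).
Proof.
rewrite /splits => eA eB; apply: splits_subv; rewrite subv_add; apply/andP; split.
- by rewrite {1}eA addvS ?capvS ?addvSl.
- by rewrite {1}eB addvS ?capvS ?addvSr.
Qed.

(* A vector of A :&: B has the same W (+) U components whether split in A or in B. *)
Lemma splits_capv W U A B : directv (W + U) ->
  splits W U A -> splits W U B -> splits W U (A :&: B).
Proof.
move=> dWU eA eB; apply: splits_subv; apply/subvP => v /memv_capP[vA vB].
have /memv_addP[a1 /memv_capP[a1A a1W] [a2 /memv_capP[a2A a2U] ea]] :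
  v \in (A :&: W + A :&: U)%VS by rewrite -eA.
have /memv_addP[b1 /memv_capP[b1B b1W] [b2 /memv_capP[b2B b2U] eb]] :
  v \in (B :&: W + B :&: U)%VS by rewrite -eB.
have := (directv_add_unique dWU) a1 b1 a2 b2 a1W b1W a2U b2U.
rewrite -ea -eb eqxx => /esym/eqP[e1 e2].
apply/memv_addP; exists a1; first by rewrite !memv_cap a1A a1W e1 b1B.
by exists a2; rewrite // !memv_cap a2A a2U e2 b2B.
Qed.

Lemma splits_subl W U A : (A <= W)%VS -> splits W U A.
Proof. by move=> sAW; apply: splits_subv; rewrite (capv_idPl sAW) addvSl. Qed.

Lemma splits_fullv W U : (W + U)%VS = fullv -> splits W U fullv.
Proof. by move=> WUf; rewrite /splits !capfv WUf. Qed.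

(* U' := U + D with D a complement of T :&: W + U in T; W :&: U' = 0 because
   D meets T :&: W + U trivially. *)
Lemma complement_extend W U T : (W :&: U = 0)%VS -> (U <= T)%VS ->
  exists U', [/\ (U <= U' <= T)%VS, (W :&: U' = 0)%VS & (T <= T :&: W + U')%VS].
Proof.
move=> WU0 sUT; set D := (T :\: (T :&: W + U))%VS.
have sDT : (D <= T)%VS by apply: diffvSl.
exists (U + D)%VS; split.
- by rewrite addvSl subv_add sUT sDT.
- apply/eqP; rewrite -subv0; apply/subvP => v /memv_capP[vW].
  case/memv_addP=> u uU [d dD ev].
  have Tv : v \in T by rewrite ev memvD ?(subvP sUT u) ?(subvP sDT d).
  have dTWU : d \in (T :&: W + U)%VS.
    have -> : d = v - u by rewrite ev [u + d]addrC addrK.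
    by rewrite memvB ?(subvP (addvSr _ _) u) ?(subvP (addvSl _ _) v) ?memv_cap ?Tv.
  have d0 : d = 0.
    by apply/eqP; rewrite -memv0 -(capv_diff T (T :&: W + U)) memv_cap dD.
  by rewrite -WU0 memv_cap vW ev d0 addr0.
- have eT : (D + (T :&: W + U) = T)%VS.
    have sTWU : (T :&: W + U <= T)%VS by rewrite subv_add capvSl sUT.
    by rewrite -{2}(addv_diff_cap T (T :&: W + U)) (capv_idPr sTWU).
  by rewrite -{1}eT addvC addvA.
Qed.

(* Extend a complement of W in S to one in T, then to one in the whole space. *)
Lemma splits_chain_complement W S T : (S <= T)%VS ->
  exists U, [/\ directv (W + U), (W + U)%VS = fullv, splits W U S & splits W U T].
Proof.
move=> sST.
have [U1 [/andP[_ sU1S] WU1 eS]] := complement_extend (capv0 W) (sub0v S).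
have [U2 [/andP[sU12 sU2T] WU2 eT]] := complement_extend WU1 (subv_trans sU1S sST).
have [U [/andP[sU2 _] WU eF]] := complement_extend WU2 (subvf U2).
have sU1 := subv_trans sU12 sU2.
exists U; split.
- exact/directv_addP.
- by apply/subv_anti; rewrite subvf (subv_trans eF) // addvS // capvSr.
- apply: splits_subv; rewrite (subv_trans eS) // addvS //.
  by rewrite subv_cap sU1S sU1.
- apply: splits_subv; rewrite (subv_trans eT) // addvS //.
  by rewrite subv_cap sU2T sU2.
Qed.

Lemma splits_rep_eval W U (X Y : 'I_3 -> {vspace vT}) :
  directv (W + U) -> (W + U)%VS = fullv ->
  (forall m, splits W U (X m)) -> (forall m, splits W U (Y m)) ->
  forall t, splits W U (rep_eval X Y t).
Proof.
move=> dWU WUf sX sY; elim=> [m|m||a ha b hb|a ha b hb] /=.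
- exact: sX.
- exact: sY.
- exact: splits_fullv.
- exact: splits_addv.
- exact: splits_capv.
Qed.

End SplittingAlongDecomposition.

Lemma ord3_third (i j : 'I_3) : i != j ->
  exists k : 'I_3, forall m, m != i -> m != j -> m = k.
Proof.
move=> ij; exists (inord (3 - i - j)) => m mi mj; apply/val_inj.
case: i ij mi => [[|[|[|//]]] pi]; case: j mj => [[|[|[|//]]] pj];
  case: m => [[|[|[|//]]] pm] //= _ _ _; by rewrite inordK.
Qed.

Theorem mainTheorem12 (i j : 'I_3) : i != j -> perfect (TJoin (GY i) (GY j)).
Proof.
move=> ij K vT X Y XY [_ indec] /=; set W := (Y i + Y j)%VS.
have [W0|Wn0] := eqVneq W 0%VS; first by left.
have [Wf|Wnf] := eqVneq W fullv; first by right.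
exfalso; apply: indec.
have [k kP] := ord3_third ij.
have [U [dWU WUf sXk sYk]] := splits_chain_complement W (XY k).
have sYW m : m != k -> (Y m <= W)%VS.
  move=> mk; have [->|mi] := eqVneq m i; first exact: addvSl.
  have [->|mj] := eqVneq m j; first exact: addvSr.
  by rewrite (kP m mi mj) eqxx in mk.
exists W, U; split=> //.
- by apply: contra_neq Wnf => U0; rewrite -WUf U0 addv0.
- apply: splits_rep_eval => // m; have [->|mk] := eqVneq m k => //.
  + exact/splits_subl/(subv_trans (XY m))/sYW.
  + exact/splits_subl/sYW.
Qed.
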